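(* Let $A$ be a commutative ring and $\sigma$ a hereditary torsion theory on $A$-modules of finite type. The following are equivalent: (a) $A$ is totally $\sigma$-artinian; (b) $\mathcal{K}(\sigma)=\mathcal{C}(\sigma)$, this set is finite, and $A$ is totally $\sigma_{A\setminus\mathfrak{p}}$-artinian for every $\mathfrak{p}\in\mathcal{C}(\sigma)$.
   Context: $\mathcal{L}(\tau)$ denotes the Gabriel filter of a hereditary torsion theory $\tau$. $\sigma$ is of finite type if every ideal in $\mathcal{L}(\sigma)$ contains a finitely generated ideal in $\mathcal{L}(\sigma)$. $A$ is totally $\tau$-artinian if for every descending chain of ideals $\mathfrak{a}_1\supseteq\mathfrak{a}_2\supseteq\cdots$ there exist $m$ and $\mathfrak{h}\in\mathcal{L}(\tau)$ with $\mathfrak{a}_m\mathfrak{h}\subseteq\mathfrak{a}_s$ for all $s\ge m$. For a prime $\mathfrak{p}$, $\sigma_{A\setminus\mathfrak{p}}$ has Gabriel filter $\{\mathfrak{a}:\mathfrak{a}\not\subseteq\mathfrak{p}\}$. $\mathcal{K}(\sigma)$ is the set of primes $\mathfrak{p}$ with $\mathfrak{p}\notin\mathcal{L}(\sigma)$, and $\mathcal{C}(\sigma)$ is the set of maximal elements of $\mathcal{K}(\sigma)$. *)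

From HB Require Import structures.
From mathcomp Require Import all_boot all_order all_algebra.
Set Implicit Arguments. Unset Strict Implicit. Unset Printing Implicit Defensive.
Import GRing.Theory.
Local Open Scope ring_scope.

Section Ideals.
Variable A : comPzRingType.

Definition is_ideal (I : A -> Prop) : Prop :=
  [/\ I 0, (forall x y, I x -> I y -> I (x + y)) & (forall r x, I x -> I (r * x))].

Definition subid (I J : A -> Prop) : Prop := forall x, I x -> J x.

Definition ideal_eq (I J : A -> Prop) : Prop := forall x, I x <-> J x.

Definition ideal_mul (I J : A -> Prop) : A -> Prop := fun z =>
  exists s : seq (A * A), (forall p, p \in s -> I p.1 /\ J p.2) /\
    z = \sum_(p <- s) p.1 * p.2.

Definition ideal_cap (I J : A -> Prop) : A -> Prop := fun z => I z /\ J z.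

Definition ideal_colon (I : A -> Prop) (x : A) : A -> Prop := fun r => I (r * x).

Definition fin_gen (I : A -> Prop) : Prop :=
  exists s : seq A, forall x,
    I x <-> exists c : 'I_(size s) -> A, x = \sum_(i < size s) c i * s`_i.

Definition prime_ideal (P : A -> Prop) : Prop :=
  [/\ is_ideal P, ~ P 1 & forall x y, P (x * y) -> P x \/ P y].

(* Gabriel filter (Stenstrom, Rings of Quotients, VI.5, axioms T1-T4):
   hereditary torsion theories on A-Mod correspond bijectively to these,
   so a hereditary torsion theory sigma is represented by its filter L(sigma). *)
Definition gabriel_filter (L : (A -> Prop) -> Prop) : Prop :=
  (forall I, L I -> is_ideal I) /\ L (fun _ => True) /\
  [/\ (forall I J, L I -> is_ideal J -> subid I J -> L J),
      (forall I J, L I -> L J -> L (ideal_cap I J)),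
      (forall I x, L I -> L (ideal_colon I x)) &
      (forall I J, is_ideal I -> L J ->
         (forall x, J x -> L (ideal_colon I x)) -> L I)].

Definition finite_type (L : (A -> Prop) -> Prop) : Prop :=
  forall I, L I -> exists J, [/\ fin_gen J, is_ideal J, L J & subid J I].

Definition totally_artinian (L : (A -> Prop) -> Prop) : Prop :=
  forall a : nat -> A -> Prop,
    (forall n, is_ideal (a n)) -> (forall n, subid (a n.+1) (a n)) ->
    exists m, exists h, L h /\ forall s, (m <= s)%N -> subid (ideal_mul (a m) h) (a s).

(* Gabriel filter of sigma_{A \ p} *)
Definition filt_compl (P : A -> Prop) : (A -> Prop) -> Prop :=
  fun I => is_ideal I /\ ~ subid I P.

Definition Kset (L : (A -> Prop) -> Prop) (P : A -> Prop) : Prop :=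
  prime_ideal P /\ ~ L P.

Definition Cset (L : (A -> Prop) -> Prop) (P : A -> Prop) : Prop :=
  Kset L P /\ forall Q, Kset L Q -> subid P Q -> ideal_eq P Q.

Definition finite_idset (S : (A -> Prop) -> Prop) : Prop :=
  exists l : seq (A -> Prop), forall P, S P -> exists2 i, (i < size l)%N & ideal_eq P (nth (fun _ => False) l i).

End Ideals.

From mathcomp Require Import all_boot all_order all_algebra.
From mathcomp Require Import boolp ring.
From mathcomp Require classical_sets.
Set Implicit Arguments. Unset Strict Implicit. Unset Printing Implicit Defensive.
Import GRing.Theory.
Local Open Scope ring_scope.

(* (a) => (b): if A is totally sigma-artinian, a prime P of K(sigma) inside an
   ideal Q outside L(sigma) equals Q (use the chain P + Ax^n), so
   K(sigma) = C(sigma); infinitely many primes of C(sigma) would give a chain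
   of finite intersections violating prime avoidance; and L(sigma) is
   contained in each L(sigma_{A\P}), so total artinianity passes to them.
   (b) => (a): for a chain, sum the bounds h_P given by the finitely many
   localisations; the sum lies in no prime of C(sigma) = K(sigma), hence in
   L(sigma), and is a bound for the chain. *)

Section IdealArithmetic.
Variable A : comPzRingType.
Implicit Types (I J K P Q : A -> Prop) (x y z r : A).

Lemma ideal0 I : is_ideal I -> I 0.
Proof. by case. Qed.

Lemma idealD I x y : is_ideal I -> I x -> I y -> I (x + y).
Proof. by case=> _ hD _; apply: hD. Qed.

Lemma idealMl I r x : is_ideal I -> I x -> I (r * x).
Proof. by case=> _ _ hM; apply: hM. Qed.

Lemma idealMr I r x : is_ideal I -> I x -> I (x * r).
Proof. by rewrite mulrC; apply: idealMl. Qed.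

Lemma ideal_sum I (T : Type) (s : seq T) (p : pred T) (F : T -> A) :
  is_ideal I -> (forall t, p t -> I (F t)) -> I (\sum_(t <- s | p t) F t).
Proof. by move=> hI hF; apply: (big_ind I (ideal0 hI) (fun x y => idealD hI)). Qed.

Lemma ideal_sumo I n (F : 'I_n -> A) :
  is_ideal I -> (forall i, I (F i)) -> I (\sum_(i < n) F i).
Proof. by move=> hI hF; apply: ideal_sum. Qed.

Lemma ideal_mul_sub I J K :
  is_ideal K -> (forall x y, I x -> J y -> K (x * y)) -> subid (ideal_mul I J) K.
Proof.
move=> hK hIJ z [s [hs ->]]; rewrite big_seq.
by apply: ideal_sum => // p /hs []; apply: hIJ.
Qed.

Lemma ideal_mul_mem I J x y : I x -> J y -> ideal_mul I J (x * y).
Proof.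
move=> Ix Jy; exists [:: (x, y)]; split; last by rewrite big_seq1.
by move=> p; rewrite inE => /eqP ->.
Qed.

Lemma chain_mono (a : nat -> A -> Prop) :
  (forall n, subid (a n.+1) (a n)) -> forall m n, (m <= n)%N -> subid (a n) (a m).
Proof.
move=> ha m n /subnK <-; elim: (n - m)%N => [|k IH] x //.
by rewrite addSn => /ha; apply: IH.
Qed.

Lemma prime_pow_notin P x n : prime_ideal P -> ~ P x -> ~ P (x ^+ n).
Proof.
case=> _ P1 Pmul Px; elim: n => [|n IH]; first by rewrite expr0.
by rewrite exprS => /Pmul [].
Qed.

Lemma prime_mul_sub P I J :
  prime_ideal P -> (forall x y, I x -> J y -> P (x * y)) -> subid I P \/ subid J P.
Proof.
move=> [_ _ Pmul] hIJ; case: (pselect (subid I P)) => [|nIP]; [by left | right].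
move=> y Jy; apply: contrapT => nPy; apply: nIP => x Ix.
by case/Pmul: (hIJ _ _ Ix Jy) => // /nPy.
Qed.

Definition ideal_capn (p : nat -> A -> Prop) (n : nat) : A -> Prop :=
  fun x => forall i, (i <= n)%N -> p i x.

Lemma ideal_capn_ideal p n : (forall i, is_ideal (p i)) -> is_ideal (ideal_capn p n).
Proof.
move=> hp; split.
- by move=> i _; apply: ideal0.
- by move=> x y hx hy i le_in; apply: idealD; [|apply: hx|apply: hy].
- by move=> r x hx i le_in; apply: idealMl; [|apply: hx].
Qed.

Lemma ideal_capn_decr p n : subid (ideal_capn p n.+1) (ideal_capn p n).
Proof. by move=> x hx i le_in; apply: hx; apply: leqW. Qed.

Lemma prime_capn_sub p P n :
  (forall i, is_ideal (p i)) -> prime_ideal P -> subid (ideal_capn p n) P ->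
  exists2 i, (i <= n)%N & subid (p i) P.
Proof.
move=> hp pP; elim: n => [|n IH] sub.
  by exists 0%N => // x px; apply: sub => i; rewrite leqn0 => /eqP ->.
have prod_in_P x y : ideal_capn p n x -> p n.+1 y -> P (x * y).
  move=> capx py; apply: sub => i; rewrite leq_eqVlt => /orP [/eqP ->|].
    exact: idealMl.
  by rewrite ltnS => le_in; apply: idealMr (capx i le_in).
have [/IH [i le_in sub_i]|sub_n] := prime_mul_sub pP prod_in_P.
- by exists i => //; apply: leqW.
- by exists n.+1.
Qed.

Lemma colon_ideal I z : is_ideal I -> is_ideal (ideal_colon I z).
Proof.
move=> hI; split; rewrite /ideal_colon.
- by rewrite mul0r; apply: ideal0.
- by move=> x y hx hy; rewrite mulrDl; apply: idealD.
- by move=> r x hx; rewrite -mulrA; apply: idealMl.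
Qed.

Definition ideal_adjoin I z : A -> Prop := fun w => exists b r, I b /\ w = b + r * z.

Lemma ideal_adjoin_ideal I z : is_ideal I -> is_ideal (ideal_adjoin I z).
Proof.
move=> hI; split.
- by exists 0, 0; rewrite mul0r addr0; split => //; apply: ideal0.
- move=> _ _ [b [r [Ib ->]]] [b' [r' [Ib' ->]]].
  by exists (b + b'), (r + r'); split; [apply: idealD | ring].
- move=> s _ [b [r [Ib ->]]].
  by exists (s * b), (s * r); split; [apply: idealMl | ring].
Qed.

Lemma ideal_adjoin_sub I z : subid I (ideal_adjoin I z).
Proof. by move=> x Ix; exists x, 0; rewrite mul0r addr0. Qed.

Lemma ideal_adjoin_mem I z : is_ideal I -> ideal_adjoin I z z.
Proof. by move=> hI; exists 0, 1; rewrite mul1r add0r; split => //; apply: ideal0. Qed.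

Definition ideal_sumfam n (H : 'I_n -> A -> Prop) : A -> Prop :=
  fun x => exists c : 'I_n -> A, (forall i, H i (c i)) /\ x = \sum_(i < n) c i.

Lemma ideal_sumfam_ideal n (H : 'I_n -> A -> Prop) :
  (forall i, is_ideal (H i)) -> is_ideal (ideal_sumfam H).
Proof.
move=> hH; split.
- by exists (fun _ => 0); rewrite big1 //; split => // i; apply: ideal0.
- move=> _ _ [c [hc ->]] [c' [hc' ->]]; exists (fun i => c i + c' i).
  by rewrite big_split; split => // i; apply: idealD.
- move=> r _ [c [hc ->]]; exists (fun i => r * c i).
  by rewrite mulr_sumr; split => // i; apply: idealMl.
Qed.

Lemma ideal_sumfam_sub n (H : 'I_n -> A -> Prop) i :
  (forall j, is_ideal (H j)) -> subid (H i) (ideal_sumfam H).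
Proof.
move=> hH x Hx; exists (fun j => if j == i then x else 0); split.
  by move=> j; case: eqP => [->|_] //; apply: ideal0.
by rewrite (bigD1 i) //= eqxx big1 ?addr0 // => j /negbTE ->.
Qed.

Definition ideal_zero : A -> Prop := fun x => x = 0.

Lemma ideal_zero_ideal : is_ideal ideal_zero.
Proof.
split => //; first by move=> x y -> ->; rewrite addr0.
by move=> r x ->; rewrite mulr0.
Qed.

Section Chains.
Variables (T : Type) (C : T -> Prop) (F : T -> A -> Prop).
Hypothesis F_ideal : forall t, C t -> is_ideal (F t).
Hypothesis F_chain : forall t1 t2, C t1 -> C t2 -> subid (F t1) (F t2) \/ subid (F t2) (F t1).
Hypothesis C_nonempty : exists t, C t.

Definition chain_union : A -> Prop := fun x => exists2 t, C t & F t x.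

Lemma chain_upper t1 t2 : C t1 -> C t2 ->
  exists t, [/\ C t, subid (F t1) (F t) & subid (F t2) (F t)].
Proof. by move=> C1 C2; case: (F_chain C1 C2) => sub; [exists t2 | exists t1]; split. Qed.

Lemma chain_union_ideal : is_ideal chain_union.
Proof.
have [t0 Ct0] := C_nonempty; split.
- by exists t0 => //; apply: ideal0; apply: F_ideal.
- move=> x y [t1 C1 x1] [t2 C2 y2]; have [t [Ct s1 s2]] := chain_upper C1 C2.
  by exists t => //; apply: idealD; [apply: F_ideal | apply: s1 | apply: s2].
- by move=> r x [t Ct xt]; exists t => //; apply: idealMl => //; apply: F_ideal.
Qed.

Lemma chain_union_finite (s : seq A) :
  (forall x, x \in s -> chain_union x) -> exists2 t, C t & forall x, x \in s -> F t x.
Proof.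
elim: s => [_|y s IH sU]; first by have [t Ct] := C_nonempty; exists t.
have [t1 C1 s1] : exists2 t, C t & forall x, x \in s -> F t x.
  by apply: IH => x xs; apply: sU; rewrite inE xs orbT.
have [t2 C2 y2] := sU y (mem_head y s).
have [t [Ct sub1 sub2]] := chain_upper C1 C2.
by exists t => // x; rewrite inE => /orP [/eqP ->|/s1]; [apply: sub2 | apply: sub1].
Qed.

End Chains.

Section Generators.
Variables (J : A -> Prop) (s : seq A).
Hypothesis gen : forall x, J x <-> exists c : 'I_(size s) -> A, x = \sum_(i < size s) c i * s`_i.

Lemma generated_mem x : x \in s -> J x.
Proof.
move=> xs; have ix : (index x s < size s)%N by rewrite index_mem.
apply/gen; exists (fun j => if j == Ordinal ix then 1 else 0).
rewrite (bigD1 (Ordinal ix)) //= eqxx mul1r nth_index // big1 ?addr0 //.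
by move=> j /negbTE ->; rewrite mul0r.
Qed.

Lemma generated_sub I : is_ideal I -> (forall x, x \in s -> I x) -> subid J I.
Proof.
move=> hI sI x /gen [c ->]; apply: ideal_sumo => // i.
by apply: idealMl => //; apply: sI; apply: mem_nth.
Qed.

End Generators.
End IdealArithmetic.

Section GabrielFilters.
Variables (A : comPzRingType) (L : (A -> Prop) -> Prop).
Hypothesis gL : gabriel_filter L.
Implicit Types (I J P q h : A -> Prop).

Lemma filter_ideal I : L I -> is_ideal I.
Proof. exact: (proj1 gL). Qed.

Lemma filter_up I J : L I -> is_ideal J -> subid I J -> L J.
Proof. by case: gL => _ [_ [up _ _ _]]; apply: up. Qed.

Lemma filter_not_sub I J : L I -> is_ideal J -> ~ L J -> ~ subid I J.
Proof. by move=> LI hJ nLJ IJ; apply/nLJ/(filter_up LI). Qed.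

Lemma filter_sub_compl P I : is_ideal P -> ~ L P -> L I -> filt_compl P I.
Proof. by move=> hP nLP LI; split; [apply: filter_ideal | apply: filter_not_sub]. Qed.

(* An ideal maximal among the ideals outside L(sigma) is prime; this uses
   the axiom T4 on the ideal q + Ax, whose colons contain q + Ay. *)
Lemma maximal_outside_filter_prime q :
  is_ideal q -> ~ L q -> (forall z, ~ q z -> L (ideal_adjoin q z)) -> prime_ideal q.
Proof.
move=> hq nLq max_q; split => // [q1|x y qxy].
  apply/nLq/(filter_up (proj1 (proj2 gL))) => // x _.
  by rewrite -[x]mulr1; apply: idealMl.
case: (pselect (q x)) => [|nqx]; [by left | right]; apply: contrapT => nqy.
have colon_x w : ideal_adjoin q x w -> subid (ideal_adjoin q y) (ideal_colon q w).
  move=> [b [r [qb ->]]] _ [b' [r' [qb' ->]]]; rewrite /ideal_colon.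
  have -> : (b' + r' * y) * (b + r * x) =
            (b + r * x) * b' + (r' * y) * b + (r' * r) * (x * y) by ring.
  by apply: idealD => //; [apply: idealD => //|]; apply: idealMl.
have [_ [_ [_ _ _ T4]]] := gL; apply/nLq/(T4 _ _ hq (max_q x nqx)) => w /colon_x.
by apply: filter_up; [apply: max_q | apply: colon_ideal].
Qed.

Hypothesis fL : finite_type L.

(* For sigma of finite type, the union of a nonempty chain of ideals outside
   L(sigma) is outside L(sigma): a finitely generated member of L(sigma)
   inside the union would already lie inside one member of the chain. *)
Lemma chain_union_outside_filter (T : Type) (C : T -> Prop) (F : T -> A -> Prop) :
  (forall t, C t -> is_ideal (F t)) ->
  (forall t1 t2, C t1 -> C t2 -> subid (F t1) (F t2) \/ subid (F t2) (F t1)) ->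
  (exists t, C t) -> (forall t, C t -> ~ L (F t)) -> ~ L (chain_union C F).
Proof.
move=> F_ideal F_chain C_ne F_out LU; have [J [[s gen] _ LJ JU]] := fL LU.
have [t Ct s_in_t] :=
  chain_union_finite F_chain C_ne (fun x xs => JU _ (generated_mem gen xs)).
apply: (F_out t Ct); apply: filter_up LJ (F_ideal t Ct)
  (generated_sub gen (F_ideal t Ct) s_in_t).
Qed.

Lemma exists_Kset_above h : is_ideal h -> ~ L h -> exists2 q, Kset L q & subid h q.
Proof.
move=> hh nLh.
pose T := {I : A -> Prop | [/\ is_ideal I, subid h I & ~ L I]}.
pose R (s t : T) := `[< subid (sval s) (sval t) >].
pose mk I (hI : [/\ is_ideal I, subid h I & ~ L I]) : T := exist _ I hI.
pose t0 := mk h (And3 hh (fun _ hx => hx) nLh).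
have [[q [hq hq_sub nLq]] q_max] : exists t, classical_sets.premaximal R t.
  apply: (classical_sets.ZL_preorder t0).
  - by move=> s; apply/asboolP.
  - by move=> r s u /asboolP rs /asboolP su; apply/asboolP => x /rs /su.
  move=> C Ctot; case: (pselect (exists s, C s)) => [C_ne | C_empty]; last first.
    by exists t0 => s Cs; case: C_empty; exists s.
  have ideal_C s : C s -> is_ideal (sval s) by case: (svalP s).
  have out_C s : C s -> ~ L (sval s) by case: (svalP s).
  have chain_C s1 s2 : C s1 -> C s2 -> subid (sval s1) (sval s2) \/ subid (sval s2) (sval s1).
    by move=> C1 C2; case: (Ctot _ _ C1 C2) => /asboolP; [left | right].
  have h_sub : subid h (chain_union C sval).
    by have [s0 Cs0] := C_ne; move=> x hx; exists s0 => //; case: (svalP s0) => _ + _; apply.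
  exists (mk _ (And3 (chain_union_ideal ideal_C chain_C C_ne) h_sub
                        (chain_union_outside_filter ideal_C chain_C C_ne out_C))).
  by move=> s Cs; apply/asboolP => x sx; exists s.
exists q => //; split => //; apply: maximal_outside_filter_prime => // z nqz.
apply: contrapT => nLqz.
pose s := mk _ (And3 (ideal_adjoin_ideal z hq)
                 (fun x hx => ideal_adjoin_sub z (hq_sub x hx)) nLqz).
have /asboolP qz_sub_q := q_max s (asboolT (@ideal_adjoin_sub _ q z)).
by apply/nqz/qz_sub_q/ideal_adjoin_mem.
Qed.

End GabrielFilters.

Section TotallyArtinian.
Variable A : comPzRingType.
Implicit Types (L : (A -> Prop) -> Prop) (I P Q h : A -> Prop) (a : nat -> A -> Prop).

Definition artinian_bound a (m : nat) h : Prop :=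
  forall s, (m <= s)%N -> subid (ideal_mul (a m) h) (a s).

Lemma artinian_mono L L' :
  (forall I, L I -> L' I) -> totally_artinian L -> totally_artinian L'.
Proof.
move=> LL' TA a ha hd; have [m [h [Lh bound]]] := TA a ha hd.
by exists m, h; split => //; apply: LL'.
Qed.

(* If A is totally sigma-artinian, a prime P is not strictly contained in any
   ideal Q outside L(sigma): for x in Q \ P the chain P + Ax^n gives h in
   L(sigma) with x^m h ⊆ P + Ax^(m+1), which forces h ⊆ Q. *)
Lemma artinian_prime_maximal L P Q :
  gabriel_filter L -> totally_artinian L ->
  prime_ideal P -> is_ideal Q -> ~ L Q -> subid P Q -> ideal_eq P Q.
Proof.
move=> gL TA pP hQ nLQ PQ x; split=> [/PQ //|Qx]; apply: contrapT => nPx.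
have [hP _ Pmul] := pP.
have chain_decr n : subid (ideal_adjoin P (x ^+ n.+1)) (ideal_adjoin P (x ^+ n)).
  by move=> _ [b [r [Pb ->]]]; exists b, (r * x); rewrite exprS mulrA.
have [m [h [Lh bound]]] := TA _ (fun n => ideal_adjoin_ideal _ hP) chain_decr.
apply: (filter_not_sub gL Lh hQ nLQ) => y hy.
have [b [r [Pb E]]] :=
  bound m.+1 (leqnSn m) _ (ideal_mul_mem (ideal_adjoin_mem (x ^+ m) hP) hy).
have : P (x ^+ m * (y - r * x)).
  suff -> : x ^+ m * (y - r * x) = b by [].
  by rewrite mulrBr E exprS; ring.
case/Pmul => [/(prime_pow_notin pP nPx) // | Pyrx].
have -> : y = (y - r * x) + r * x by ring.
by apply: idealD => //; [apply: PQ | apply: idealMl].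
Qed.

Lemma not_finite_idset_seq (S : (A -> Prop) -> Prop) :
  ~ finite_idset S -> exists p : nat -> A -> Prop,
    (forall n, S (p n)) /\ (forall n i, (i < n)%N -> ~ ideal_eq (p n) (p i)).
Proof.
move=> nF; pose nth_id (l : seq (A -> Prop)) i := nth (fun _ => False) l i.
have fresh (l : seq (A -> Prop)) :
    exists P, S P /\ forall i, (i < size l)%N -> ~ ideal_eq P (nth_id l i).
  apply: contrapT => nE; apply: nF; exists l => P SP; apply: contrapT => nI.
  by apply: nE; exists P; split => // i il eqPi; apply: nI; exists i.
have [g gP] := choice fresh.
pose ls := fix ls n := if n is k.+1 then rcons (ls k) (g (ls k)) else [::].
have size_ls n : size (ls n) = n by elim: n => //= n IH; rewrite size_rcons IH.
have nth_ls n i : (i < n)%N -> nth_id (ls n) i = g (ls i).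
  elim: n => // n IH; rewrite ltnS leq_eqVlt /nth_id /= nth_rcons size_ls.
  by case/orP => [/eqP ->|lt_in]; [rewrite ltnn eqxx | rewrite lt_in; exact: IH].
exists (fun n => g (ls n)); split => [n|n i lt_in]; first by case: (gP (ls n)).
by rewrite -(nth_ls n i) //; apply: (gP (ls n)).2; rewrite size_ls.
Qed.

(* If A is totally sigma-artinian, C(sigma) is finite: otherwise the
   intersections of infinitely many of its primes form a chain whose
   stabilisation contradicts prime avoidance and maximality. *)
Lemma artinian_Cset_finite L :
  gabriel_filter L -> totally_artinian L -> finite_idset (Cset L).
Proof.
move=> gL TA; apply: contrapT => /not_finite_idset_seq [p [Cp p_new]].
have hp n : is_ideal (p n) by case: (Cp n) => [[[]]].
have [m [h [Lh bound]]] := TA _ (fun n => ideal_capn_ideal n hp) (@ideal_capn_decr _ p).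
have [[pP nLP] _] := Cp m.+1.
have prod_in x y : ideal_capn p m x -> h y -> p m.+1 (x * y).
  by move=> cx hy; apply: (bound m.+1 (leqnSn m) _ (ideal_mul_mem cx hy)).
have [/(prime_capn_sub hp pP) [i le_im sub_i] | ] := prime_mul_sub pP prod_in; last first.
  exact: (filter_not_sub gL Lh (hp _) nLP).
have eq_i := (Cp i).2 _ (Cp m.+1).1 sub_i.
by apply: (p_new m.+1 i le_im) => x; split => [/(eq_i x).2 | /(eq_i x).1].
Qed.

Lemma artinian_bound_sumfam a n (m : 'I_n -> nat) (H : 'I_n -> A -> Prop) :
  (forall k, is_ideal (a k)) -> (forall k, subid (a k.+1) (a k)) ->
  (forall i, artinian_bound a (m i) (H i)) ->
  artinian_bound a (\max_i m i) (ideal_sumfam H).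
Proof.
move=> ha hd bound s le_s; apply: ideal_mul_sub => // x _ ax [c [hc ->]].
rewrite mulr_sumr; apply: ideal_sumo => // i.
have le_mi : (m i <= \max_i m i)%N := leq_bigmax i.
apply: (bound i s (leq_trans le_mi le_s)); apply: ideal_mul_mem (hc i).
exact: chain_mono hd _ _ le_mi _ ax.
Qed.

Lemma filter_of_avoiding_Cset L h :
  gabriel_filter L -> finite_type L -> (forall P, Kset L P -> Cset L P) ->
  is_ideal h -> (forall P, Cset L P -> ~ subid h P) -> L h.
Proof.
move=> gL fL KC hh avoid; apply: contrapT => nLh.
by have [q /KC Cq hq] := exists_Kset_above gL fL hh nLh; apply: avoid Cq hq.
Qed.

(* Converse direction: given bounds for the finitely many localisations at
   the primes of C(sigma), their sum is a bound lying in L(sigma). *)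
Lemma artinian_of_local L :
  gabriel_filter L -> finite_type L -> (forall P, Kset L P -> Cset L P) ->
  finite_idset (Cset L) -> (forall P, Cset L P -> totally_artinian (filt_compl P)) ->
  totally_artinian L.
Proof.
move=> gL fL KC [l enum_C] TC a ha hd.
pose l_ i := nth (fun _ => False) l i.
(* For each listed ideal, a bound whose ideal avoids it when it is a prime
   of C(sigma), and the zero ideal otherwise. *)
have local_bound (i : 'I_(size l)) : exists mh : nat * (A -> Prop),
    [/\ is_ideal mh.2, artinian_bound a mh.1 mh.2 &
        forall P, Cset L P -> ideal_eq P (l_ i) -> ~ subid mh.2 P].
  case: (pselect (exists2 P, Cset L P & ideal_eq P (l_ i))) => [[P CP eqP] | none].
    have [m [h [[hh nhP] bound]]] := TC P CP a ha hd.
    by exists (m, h); split => // Q _ eqQ hQ; apply: nhP => x /hQ /(eqQ x).1 /(eqP x).2.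
  exists (0%N, @ideal_zero A); split => [|s _|P CP eqP]; first exact: ideal_zero_ideal.
    by apply: ideal_mul_sub => // x y _ ->; rewrite mulr0; apply: ideal0.
  by case: none; exists P.
have [mh mhP] := choice local_bound.
have hH i : is_ideal (mh i).2 by case: (mhP i).
exists (\max_i (mh i).1), (ideal_sumfam (fun i => (mh i).2)); split.
  apply: (filter_of_avoiding_Cset gL fL KC); first exact: ideal_sumfam_ideal.
  move=> P CP sub; have [i il eqP] := enum_C P CP.
  have [_ _ avoid] := mhP (Ordinal il); apply: (avoid P CP eqP) => x hx.
  exact: sub (ideal_sumfam_sub (i := Ordinal il) hH hx).
by apply: artinian_bound_sumfam => // i; case: (mhP i).
Qed.

End TotallyArtinian.

Theorem mainTheorem17 (A : comPzRingType) (L : (A -> Prop) -> Prop) :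
  gabriel_filter L -> finite_type L ->
  (totally_artinian L <->
   [/\ (forall P, Kset L P <-> Cset L P),
       finite_idset (Cset L) &
       (forall P, Cset L P -> totally_artinian (filt_compl P))]).
Proof.
move=> gL fL; split=> [TA | [KC finC TC]]; last first.
  by apply: artinian_of_local => // P /KC.
have KC P : Kset L P <-> Cset L P.
  split=> [KP | []//]; split=> // Q [[hQ _ _] nLQ].
  exact: (artinian_prime_maximal gL TA KP.1 hQ nLQ).
split=> //; first exact: artinian_Cset_finite.
move=> P [[[hP _ _] nLP] _]; apply: artinian_mono TA => I.
exact: filter_sub_compl.
Qed.
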